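(* Let $L$ be a finite lattice, $\varphi$ a capacity on $L$, and $\Phi\in M_\infty(\mathcal L)$ with $\Phi(\langle x\rangle^* )=\varphi(x)$ for all $x\in L$. Then the following are equivalent: (i) $\varphi$ is completely alternating and $\Phi$ is the dual Möbius extension of $\varphi$, i.e. the Möbius inverse $F$ of $\Phi$ vanishes outside $\{U\in\mathcal L: L\setminus U=\{y\in L:y\le c\}\text{ for some }c\in L\}$; (ii) $\Phi(\langle a,b\rangle^* )=\varphi(a)+\varphi(b)-\varphi(a\vee b)$ for every pair $\{a,b\}$ of elements of $L$.
   Context: $L$ is a finite lattice with minimum $\hat0$, maximum $\hat1$, join $\vee$. A capacity on $L$ is a monotone function $\varphi$ with $\varphi(\hat0)=0$, $\varphi(\hat1)=1$. Dual differences: $\Delta_b\varphi(x)=\varphi(x)-\varphi(x\vee b)$, $\Delta_{b_1,\ldots,b_n}\varphi=\Delta_{b_n}(\Delta_{b_1,\ldots,b_{n-1}}\varphi)$; $\varphi$ is completely alternating if $\Delta_{b_1,\ldots,b_n}\varphi\le0$ for all $b_1,\dots,b_n\in L$, $n\ge1$. For $A\subseteq L$, $\langle A\rangle^*=\{x:x\ge a\text{ for some }a\in A\}$. $\mathcal L$ is the set of nonempty up-sets of $L$, ordered by $U\preceq V$ iff $U\supseteq V$ (a distributive lattice with meet = union); $M_\infty(\mathcal L)$ is the set of nonnegative completely monotone functions on it (all iterated differences $\Phi(W)-\Phi(W\wedge U)$ nonnegative). The Möbius inverse of $\Phi$ is the unique $F$ with $\Phi(U)=\sum_{V\preceq U}F(V)$;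 equivalently $F$ is the distribution of an $\mathcal L$-valued random variable $\mathcal X$ with $\Phi(U)=\mathbb P(\mathcal X\supseteq U)$. *)

From HB Require Import structures.
From mathcomp Require Import all_boot all_order all_algebra.
From mathcomp Require Import reals.
Set Implicit Arguments. Unset Strict Implicit. Unset Printing Implicit Defensive.
Import Order.TTheory GRing.Theory Num.Theory.
Local Open Scope ring_scope.

Section Defs.
Variables (d : Order.disp_t) (L : finTBLatticeType d) (R : realType).

Definition capacity (phi : L -> R) : Prop :=
  [/\ (forall x y : L, (x <= y)%O -> phi x <= phi y),
      phi (\bot)%O = 0 & phi (\top)%O = 1].

Definition dual_diff (b : L) (f : L -> R) : L -> R :=
  fun x => f x - f (Order.join x b).

Definition dual_diffs (bs : seq L) (f : L -> R) : L -> R :=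
  foldl (fun g b => dual_diff b g) f bs.

Definition completely_alternating (phi : L -> R) : Prop :=
  forall (bs : seq L), (0 < size bs)%N -> forall x : L, dual_diffs bs phi x <= 0.

Definition upclosure (A : {set L}) : {set L} :=
  [set x | [exists a in A, (a <= x)%O]].

(* membership in the lattice cal L of nonempty up-sets *)
Definition is_upset (U : {set L}) : bool :=
  (U != set0) && [forall x, forall y, (x \in U) && (x <= y)%O ==> (y \in U)].

(* In cal L (order: U <= V iff U \supseteq V) the meet is the union, so
   Delta_U Phi (W) = Phi W - Phi (W \wedge U) = Phi W - Phi (W :|: U). *)
Definition up_diff (U : {set L}) (Phi : {set L} -> R) : {set L} -> R :=
  fun W => Phi W - Phi (W :|: U).

Definition up_diffs (Us : seq {set L}) (Phi : {set L} -> R) : {set L} -> R :=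
  foldl (fun G U => up_diff U G) Phi Us.

Definition completely_monotone (Phi : {set L} -> R) : Prop :=
  (forall W, is_upset W -> 0 <= Phi W) /\
  (forall Us : seq {set L}, (0 < size Us)%N -> all is_upset Us ->
     forall W, is_upset W -> 0 <= up_diffs Us Phi W).

(* F is the Moebius inverse of Phi on cal L:
   Phi U = sum_{V in cal L, V <= U (i.e. V \supseteq U)} F V *)
Definition mobius_inverse (Phi F : {set L} -> R) : Prop :=
  forall U, is_upset U ->
    Phi U = \sum_(V : {set L} | is_upset V && (U \subset V)) F V.

Definition co_principal (U : {set L}) : Prop :=
  exists c : L, ~: U = [set y | (y <= c)%O].

End Defs.

(* Since [Phi] is completely
   monotone, its Moebius inverse [F] is nonnegative on every up-set other than
   [L]; iterated differences of [Phi] along principal up-sets are sums of [F]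
   over the up-sets avoiding them.  The pair formula (ii) says exactly that the
   second difference along [up1 a], [up1 b] vanishes at [up1 (a `|` b)]; by
   complete monotonicity it then vanishes at every smaller up-set, which makes
   [U |-> Phi (A :|: U)] modular on principal up-sets.  This gives, on the one
   hand, [dual_diffs bs phi y = Phi (A :|: up1 y) - Phi A] for some up-set [A],
   hence complete alternation, and on the other hand [F V = 0] whenever some
   [a, b] outside [V] have their join in [V]; an up-set whose complement is
   closed under joins is co-principal.  Conversely, if [F] lives on
   co-principal up-sets, then (ii) follows from the identity
   [(a `|` b \in V) = (a \in V) || (b \in V)] for such [V]. *)
From HB Require Import structures.
From mathcomp Require Import all_boot all_order all_algebra.
From mathcomp Require Import reals.
From mathcomp Require Import lra.
Set Implicit Arguments. Unset Strict Implicit. Unset Printing Implicit Defensive.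
Import Order.TTheory GRing.Theory Num.Theory.
Local Open Scope ring_scope.

Section UpSets.
Variables (d : Order.disp_t) (L : finTBLatticeType d).
Implicit Types (U V W : {set L}) (x y a b : L).

Definition up1 x : {set L} := upclosure [set x].

Lemma in_up1 x y : (y \in up1 x) = (x <= y)%O.
Proof.
rewrite inE; apply/existsP/idP => [[z /andP[/set1P-> //]] | xy].
by exists x; rewrite set11.
Qed.

Lemma upsetP U x y : is_upset U -> x \in U -> (x <= y)%O -> y \in U.
Proof.
case/andP=> _ /forallP/(_ x)/forallP/(_ y) xyU xU le_xy.
by rewrite xU le_xy in xyU.
Qed.

Lemma up1_upset x : is_upset (up1 x).
Proof.
apply/andP; split; first by apply/set0Pn; exists x; rewrite in_up1.
apply/forallP=> y; apply/forallP=> z; apply/implyP=> /andP[].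
by rewrite !in_up1; apply: le_trans.
Qed.

Lemma setU_upset U V : is_upset U -> is_upset V -> is_upset (U :|: V).
Proof.
move=> hU hV; apply/andP; split.
  by case/andP: hU => /set0Pn[x xU] _; apply/set0Pn; exists x; rewrite inE xU.
apply/forallP=> y; apply/forallP=> z; apply/implyP=> /andP[].
by rewrite !inE => /orP[] yW le_yz; apply/orP; [left|right];
  apply: upsetP le_yz.
Qed.

Lemma up1_subset x V : is_upset V -> (up1 x \subset V) = (x \in V).
Proof.
move=> hV; apply/subsetP/idP => [-> // | xV y]; first by rewrite in_up1.
by rewrite in_up1; apply: upsetP.
Qed.

Lemma upclosure2 a b : upclosure [set a; b] = up1 a :|: up1 b.
Proof.
apply/setP=> y; rewrite inE in_setU !in_up1.
apply/existsP/orP => [[z /andP[/set2P[]-> ->]] | [ay | yb]]; [by left | by right | |].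
- by exists a; rewrite ay set21.
- by exists b; rewrite yb set22.
Qed.

Lemma up1_bot : up1 \bot%O = [set: L].
Proof. by apply/setP=> y; rewrite in_up1 le0x inE. Qed.

Lemma setT_upset : is_upset [set: L].
Proof. by rewrite -up1_bot up1_upset. Qed.

Lemma up1_joinl a b : up1 (a `|` b)%O \subset up1 a.
Proof. by apply/subsetP=> y; rewrite !in_up1 leUx => /andP[]. Qed.

Lemma up1_joinr a b : up1 (a `|` b)%O \subset up1 b.
Proof. by apply/subsetP=> y; rewrite !in_up1 leUx => /andP[]. Qed.

Lemma co_principal_setC_join_closed U :
  is_upset U -> U != setT ->
  (forall a b, a \notin U -> b \notin U -> (a `|` b)%O \notin U) ->
  co_principal U.
Proof.
move=> hU UnT join_closed.
have botU : (\bot%O : L) \notin U.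
  apply: contra UnT => botU; apply/eqP/setP=> y; rewrite inE.
  exact: upsetP botU (le0x y).
pose c := (\join_(y in ~: U) y)%O.
have cU : c \notin U.
  by apply: (big_ind (fun z => z \notin U)) => // y; rewrite in_setC.
exists c; apply/setP=> y; rewrite in_setC inE.
apply/idP/idP => [yU | le_yc]; first by apply: joins_sup; rewrite in_setC.
by apply: contra cU => yU; apply: upsetP le_yc.
Qed.

Lemma co_principal_join U a b :
  co_principal U -> ((a `|` b)%O \in U) = (a \in U) || (b \in U).
Proof.
case=> c /setP defU; have memU y : (y \in U) = ~~ (y <= c)%O.
  by have := defU y; rewrite in_setC inE => <-; rewrite negbK.
by rewrite !memU leUx negb_and.
Qed.

End UpSets.

Section Mobius.
Variables (d : Order.disp_t) (L : finTBLatticeType d) (R : realType).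
Variables (Phi F : {set L} -> R).
Hypothesis PhiF : mobius_inverse Phi F.

Lemma up_diffs_mobius Ws U : all (@is_upset _ L) Ws -> is_upset U ->
  up_diffs Ws Phi U =
  \sum_(V | is_upset V && (U \subset V) &&
            all (fun W : {set L} => ~~ (W \subset V)) Ws) F V.
Proof.
elim/last_ind: Ws U => [|Ws W IH] U.
  by move=> _ hU; rewrite /= PhiF //; apply: eq_bigl => V; rewrite andbT.
rewrite all_rcons => /andP[hW hWs] hU.
rewrite /up_diffs foldl_rcons -/(up_diffs Ws Phi) /up_diff.
rewrite !IH //; last exact: setU_upset.
apply/eqP; rewrite subr_eq.
rewrite [X in X == _](bigID (fun V : {set L} => W \subset V)) /= addrC.
apply/eqP; congr (_ + _); apply: eq_bigl => V; rewrite ?all_rcons ?subUset;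
  by case: is_upset (U \subset V) (W \subset V) (all _ Ws) => [] [] [] [].
Qed.

Hypothesis PhiCM : completely_monotone Phi.

Lemma mobius_ge0 U : is_upset U -> U != setT -> 0 <= F U.
Proof.
move=> hU UnT; pose Ws := [seq up1 m | m <- enum (~: U)].
have upWs : all (@is_upset _ L) Ws.
  by apply/allP=> W /mapP[m _ ->]; apply: up1_upset.
have Ws_gt0 : (0 < size Ws)%N.
  rewrite size_map -cardE card_gt0.
  by apply: contraNneq UnT => CU0; rewrite -(setCK U) CU0 setC0.
suff <- : up_diffs Ws Phi U = F U by apply: PhiCM.2.
rewrite up_diffs_mobius // (big_pred1 U) // => V /=.
apply/idP/eqP => [/andP[/andP[hV sUV] avoid] | ->].
  apply/eqP; rewrite eqEsubset sUV andbT; apply/subsetP=> m mV.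
  apply/negPn/negP=> mU.
  have : up1 m \in Ws by apply: map_f; rewrite mem_enum in_setC.
  by move/(allP avoid); rewrite up1_subset // mV.
rewrite hU subxx; apply/allP=> W /mapP[m + ->].
by rewrite mem_enum in_setC up1_subset.
Qed.

End Mobius.

Section MobiusExistence.
Variables (d : Order.disp_t) (L : finTBLatticeType d) (R : realType).
Variable Phi : {set L} -> R.

(* After [#|~: U|] rounds the recursion no longer changes at [U]. *)
Fixpoint mobius_iter (n : nat) (U : {set L}) : R :=
  if n is n'.+1 then
    Phi U - \sum_(V | is_upset V && (U \proper V)) mobius_iter n' V
  else Phi U.

Lemma mobius_iter_stable n U :
  (#|~: U| <= n)%N -> mobius_iter n.+1 U = mobius_iter n U.
Proof.
elim: n U => [|n IH] U CU_le.
  have -> : U = setT.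
    by move: CU_le; rewrite leqn0 cards_eq0 => /eqP CU0; rewrite -(setCK U) CU0 setC0.
  by rewrite /= big_pred0 ?subr0 // => V; rewrite properEneq subTset eq_sym andNb andbF.
rewrite [LHS]/= [RHS]/=; congr (_ - _); apply: eq_bigr => V /andP[_ UV].
apply: IH; rewrite -ltnS; apply: leq_trans CU_le.
by apply: proper_card; rewrite properC.
Qed.

Definition mobius_of (U : {set L}) : R := mobius_iter #|L|.+1 U.

Lemma mobius_ofE U :
  mobius_of U = Phi U - \sum_(V | is_upset V && (U \proper V)) mobius_of V.
Proof.
rewrite {1}/mobius_of [LHS]/=; congr (_ - _); apply: eq_bigr => V _.
by rewrite /mobius_of mobius_iter_stable // max_card.
Qed.

Lemma mobius_of_inverse : mobius_inverse Phi mobius_of.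
Proof.
move=> U hU; rewrite (bigD1 U) /=; last by rewrite hU subxx.
rewrite [mobius_of U]mobius_ofE (eq_bigl (fun V => is_upset V && (U \proper V))).
  by rewrite subrK.
by move=> V; rewrite properEneq (eq_sym U V) (andbC (V != U)) andbA.
Qed.

End MobiusExistence.

Section PairFormula.
Variables (d : Order.disp_t) (L : finTBLatticeType d) (R : realType).
Variables (phi : L -> R) (Phi : {set L} -> R).
Hypothesis PhiCM : completely_monotone Phi.
Hypothesis Phi_up1 : forall x : L, Phi (upclosure [set x]) = phi x.
Hypothesis pair_formula : forall a b : L,
  Phi (upclosure [set a; b]) = phi a + phi b - phi (a `|` b)%O.

Lemma Phi_setU_le U V : is_upset U -> is_upset V -> Phi (U :|: V) <= Phi U.
Proof.
move=> hU hV; have := PhiCM.2 [:: V] isT _ U hU.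
by rewrite /= hV /up_diff subr_ge0; apply.
Qed.

Lemma up_diffs2_up1_join x b : up_diffs [:: up1 x; up1 b] Phi (up1 (x `|` b)%O) = 0.
Proof.
rewrite /up_diffs /= /up_diff.
rewrite (setUidPr (up1_joinl x b)) (setUidPr (up1_joinr x b)).
by rewrite -upclosure2 pair_formula /up1 !Phi_up1 joinC; lra.
Qed.

(* The third difference along [A] is nonnegative and equals minus the left-hand
   side, since the second difference vanishes at [up1 (x `|` b)]. *)
Lemma up_diffs2_setU_up1_join x b A : is_upset A ->
  up_diffs [:: up1 x; up1 b] Phi (A :|: up1 (x `|` b)%O) = 0.
Proof.
move=> hA; apply/eqP; rewrite eq_le; apply/andP; split; last first.
  by apply: PhiCM.2; rewrite //= ?setU_upset ?up1_upset.
have := PhiCM.2 [:: up1 x; up1 b; A] isT _ (up1 (x `|` b)%O) (up1_upset _).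
rewrite /= !up1_upset hA => /(_ isT).
have := up_diffs2_up1_join x b.
by rewrite /up_diffs /= /up_diff (setUC _ A) => ->; lra.
Qed.

Lemma Phi_setU_up1_modular A x b : is_upset A ->
  Phi (A :|: up1 x) + Phi (A :|: up1 b) =
  Phi (A :|: up1 x :|: up1 b) + Phi (A :|: up1 (x `|` b)%O).
Proof.
move=> hA; have := up_diffs2_setU_up1_join x b hA.
rewrite /up_diffs /= /up_diff -!setUA (setUidPr (up1_joinl x b)).
by rewrite (setUA (up1 _)) (setUidPr (up1_joinr x b)) (setUC (up1 b)); lra.
Qed.

Lemma dual_diffs_upset bs : (0 < size bs)%N -> exists2 A, is_upset A &
  forall y, dual_diffs bs phi y = Phi (A :|: up1 y) - Phi A.
Proof.
elim/last_ind: bs => [// | [|b0 bs] b IH] _.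
  exists (up1 b) => [|y]; first exact: up1_upset.
  by rewrite /dual_diffs /= /dual_diff setUC -upclosure2 pair_formula /up1 !Phi_up1; lra.
have [A hA defA] := IH isT.
exists (A :|: up1 b) => [|y]; first by rewrite setU_upset ?up1_upset.
rewrite /dual_diffs foldl_rcons -/(dual_diffs _ phi) /dual_diff !defA.
by have := Phi_setU_up1_modular y b hA; rewrite setUAC; lra.
Qed.

Lemma completely_alternating_of_pair_formula : completely_alternating phi.
Proof.
move=> bs bs_gt0 y; have [A hA ->] := dual_diffs_upset bs_gt0.
by rewrite subr_le0 Phi_setU_le ?up1_upset.
Qed.

Variable F : {set L} -> R.
Hypothesis PhiF : mobius_inverse Phi F.

Lemma mobius_eq0_join U a b : is_upset U -> a \notin U -> b \notin U ->
  (a `|` b)%O \in U -> F U = 0.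
Proof.
move=> hU aU bU abU; have := up_diffs2_setU_up1_join a b hU.
rewrite (setUidPl _) ?up1_subset // (up_diffs_mobius PhiF) //=;
  last by rewrite !up1_upset.
move/psumr_eq0P; apply; last by rewrite hU subxx !(up1_subset _ hU) aU bU.
move=> V /andP[/andP[hV _] /andP[aV _]]; apply: (mobius_ge0 PhiF PhiCM hV).
by apply: contraNneq aV => ->; apply: subsetT.
Qed.

Lemma mobius_eq0_not_co_principal : Phi setT = 0 ->
  forall U, is_upset U -> ~ co_principal U -> F U = 0.
Proof.
move=> PhiT0 U hU notcoU; have [-> | UnT] := eqVneq U setT.
  rewrite -PhiT0 PhiF ?setT_upset // (big_pred1 setT) // => V.
  by rewrite /= subTset; case: eqP => [->|]; rewrite ?setT_upset ?andbF.
apply/eqP/negPn/negP => FU_neq0; apply: notcoU.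
apply: (co_principal_setC_join_closed hU UnT) => a b aU bU; apply/negP => abU.
by rewrite (mobius_eq0_join hU aU bU abU) eqxx in FU_neq0.
Qed.

End PairFormula.

Lemma Phi_pair_of_co_principal_mobius (d : Order.disp_t) (L : finTBLatticeType d)
    (R : realType) (Phi F : {set L} -> R) :
  mobius_inverse Phi F ->
  (forall V, is_upset V -> ~ co_principal V -> F V = 0) ->
  forall a b : L,
    Phi (up1 a :|: up1 b) = Phi (up1 a) + Phi (up1 b) - Phi (up1 (a `|` b)%O).
Proof.
move=> PhiF Fco a b; rewrite !PhiF ?setU_upset ?up1_upset //.
rewrite !(big_mkcondr _ _ (@is_upset _ L)) -big_split -sumrB /=.
apply: eq_bigr => V hV; rewrite subUset !up1_subset //.
have [coV | notcoV] := boolP [exists c, ~: V == [set y | (y <= c)%O]].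
  have {coV} coV : co_principal V by case/existsP: coV => c /eqP; exists c.
  by rewrite co_principal_join //; case: (a \in V) (b \in V) => [] [] /=; lra.
rewrite Fco // ?if_same ?addr0 ?subr0 // => -[c defV].
by move/existsP: notcoV; apply; exists c; rewrite defV.
Qed.

Theorem proposition4p1 (d : Order.disp_t) (L : finTBLatticeType d) (R : realType)
    (phi : L -> R) (Phi : {set L} -> R)
    (hcap : capacity phi) (hPhi : completely_monotone Phi)
    (hext : forall x : L, Phi (upclosure [set x]) = phi x) :
  (completely_alternating phi /\
     (forall F : {set L} -> R, mobius_inverse Phi F ->
        forall U : {set L}, is_upset U -> ~ co_principal U -> F U = 0))
  <->
  (forall a b : L,
     Phi (upclosure [set a; b]) = phi a + phi b - phi (Order.join a b)).
Proof.
case: hcap => _ phi_bot _; split.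
  move=> [_ Fco] a b; rewrite upclosure2 -!hext.
  have PhiF := mobius_of_inverse Phi.
  exact: Phi_pair_of_co_principal_mobius PhiF (Fco _ PhiF) a b.
move=> pair_formula; split.
  exact: completely_alternating_of_pair_formula pair_formula.
move=> F PhiF; apply: (mobius_eq0_not_co_principal hPhi hext pair_formula PhiF).
by rewrite -(up1_bot L) hext.
Qed.
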